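(* Let $X$ and $Y$ be $\mathbb{R}^n$-valued random variables on the same probability space. Suppose $Y$ is centered Gaussian and there are $c_X,C_X>0$ and $m_X\in\mathbb{R}^n$ such that $X$ has a Lebesgue density $p_X$ with $p_X(x)\le C_Xe^{-c_X|x-m_X|^2}$ for all $x\in\mathbb{R}^n$. Then there is $C>0$ such that for each $a\in\mathbb{R}^n$, $$\mathbb{E}\big[e^{-|X-Y-a|^2}\big]\le Ce^{-\frac{c_X}{C}|a-m_X|^2}.$$ *)

From HB Require Import structures.
From mathcomp Require Import all_boot all_order all_algebra.
From mathcomp Require Import all_classical all_reals all_analysis.
Set Implicit Arguments. Unset Strict Implicit. Unset Printing Implicit Defensive.
Import Order.TTheory GRing.Theory Num.Theory.
Local Open Scope classical_set_scope.
Local Open Scope ring_scope.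

(* R^n is represented by n.-tuple R, with the canonical product (Borel)
   sigma-algebra generated by the coordinate projections. *)

Definition sqdist {R : realType} {n : nat} (x y : n.-tuple R) : R :=
  \sum_(i < n) (tnth x i - tnth y i) ^+ 2.

Definition tsub {R : realType} {n : nat} (x y : n.-tuple R) : n.-tuple R :=
  [tuple tnth x i - tnth y i | i < n].

Definition tdot {R : realType} {n : nat} (u x : n.-tuple R) : R :=
  \sum_(i < n) tnth u i * tnth x i.

(* Integral of a function over R^n w.r.t. n-dimensional Lebesgue measure,
   written as the iterated one-dimensional Lebesgue integral (for nonnegative
   measurable f this equals the integral w.r.t. the product Lebesgue measure
   by Tonelli). *)
Fixpoint lebesgue_nint {R : realType} (n : nat) :
    (n.-tuple R -> \bar R) -> \bar R :=
  match n return (n.-tuple R -> \bar R) -> \bar R with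
  | 0 => fun f => f [tuple]
  | n'.+1 => fun f =>
      (\int[@lebesgue_measure R]_x lebesgue_nint (fun t => f [tuple of x :: t]))%E
  end.

Definition has_lebesgue_density {R : realType} {d : measure_display}
    {Omega : measurableType d} (P : probability Omega R) (n : nat)
    (X : Omega -> n.-tuple R) (p : n.-tuple R -> R) : Prop :=
  measurable_fun setT p /\ (forall x, 0 <= p x) /\
  forall A : set (n.-tuple R), measurable A ->
    P (X @^-1` A) = lebesgue_nint (fun x => (\1_A x * p x)%:E).

Definition centered_gauss1 {R : realType} (s : R) (A : set R) : \bar R :=
  if s == 0 then \d_(0 : R) A else normal_prob 0 s A.

(* Y is a centered Gaussian vector: every linear functional <u, Y> has a
   centered (possibly degenerate) normal distribution. *)
Definition centered_gaussian {R : realType} {d : measure_display}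
    {Omega : measurableType d} (P : probability Omega R) (n : nat)
    (Y : Omega -> n.-tuple R) : Prop :=
  forall u : n.-tuple R, exists2 s : R, 0 <= s &
    forall A : set R, measurable A ->
      P ((fun w => tdot u (Y w)) @^-1` A) = centered_gauss1 s A.

(* With r = |a - m|^2 / 9, the triangle inequality |a - m| <= |X - m| + |Y| +
   |X - Y - a| shows that e^{-|X - Y - a|^2} > e^{-r} forces |X - m|^2 >= r or
   Y_i^2 >= r / (n + 1) for some coordinate i.  Hence the expectation is at most
   e^{-r} + P(|X - m|^2 >= r) + sum_i P(Y_i^2 >= r / (n + 1)).  The first tail
   is Gaussian in r because the density of X is dominated by a Gaussian kernel,
   the others because each Y_i = <e_i, Y> is a centered normal variable; a
   constant C large enough for all three rates gives the claim. *)

From HB Require Import structures.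
From mathcomp Require Import all_boot all_order all_algebra.
From mathcomp Require Import all_classical all_reals all_analysis.
From mathcomp Require Import measurable_realfun ring lra.
Set Implicit Arguments. Unset Strict Implicit. Unset Printing Implicit Defensive.
Import Order.TTheory GRing.Theory Num.Theory.
Local Open Scope classical_set_scope.
Local Open Scope ring_scope.

Section integral_nonmeasurable.
Context d (T : measurableType d) (R : realType).
Variable mu : {measure set T -> \bar R}.

(* The integrands built by [lebesgue_nint] are not known to be measurable. *)
Lemma ge0_le_integralT_nomeas (f g : T -> \bar R) :
  (forall x, (0 <= f x)%E) -> (forall x, (f x <= g x)%E) ->
  (\int[mu]_x f x <= \int[mu]_x g x)%E.
Proof.
move=> f0 fg; have g0 x : (0 <= g x)%E by apply: le_trans (fg x).
rewrite !ge0_integralTE//; apply: ereal_sup_le => _ [h /= hf <-].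
by exists h => //= x; exact: le_trans (hf x) (fg x).
Qed.

End integral_nonmeasurable.

Section union_bound.
Context d (T : measurableType d) (R : realType).
Variable P : probability T R.

Lemma ge0_integral_le_union_bound (I : Type) (r : seq I) (A : I -> set T)
    (g : T -> R) (c : R) :
  0 <= c -> (forall i, measurable (A i)) -> (forall w, 0 <= g w) ->
  (forall w, g w <= c + \sum_(i <- r) \1_(A i) w) ->
  (\int[P]_w (g w)%:E <= c%:E + \sum_(i <- r) P (A i))%E.
Proof.
move=> c0 mA g0 gs.
have mI i : measurable_fun setT (fun w => ((\1_(A i) w)%:E : \bar R)).
  by apply/measurable_EFinP; exact: measurable_indic.
apply: (@le_trans _ _ (\int[P]_w (c%:E + \sum_(i <- r) (\1_(A i) w)%:E))%E).
  apply: ge0_le_integralT_nomeas => w; first by rewrite lee_fin.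
  by rewrite sumEFin -EFinD lee_fin.
rewrite ge0_integralD//; last 2 first.
- by move=> w _; rewrite sume_ge0// => i _; rewrite lee_fin.
- exact: emeasurable_sum.
rewrite integral_cst// [X in (X + _)%E](_ : _ = c%:E); last first.
  by rewrite -[RHS]mule1; congr (_ * _)%E; exact: probability_setT.
rewrite leeD2l// ge0_integral_sum//.
by under eq_bigr do rewrite integral_indic// setIT.
Qed.

End union_bound.

Section sqdist.
Variable R : realType.

Lemma sqdist_ge0 n (x y : n.-tuple R) : 0 <= sqdist x y.
Proof. by apply: sumr_ge0 => i _; exact: sqr_ge0. Qed.

Lemma sqdist_cons n (x y : R) (t u : n.-tuple R) :
  sqdist [tuple of x :: t] [tuple of y :: u] = (x - y) ^+ 2 + sqdist t u.
Proof.
rewrite /sqdist big_ord_recl; congr (_ + _).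
by apply: eq_bigr => i _; rewrite !tnthS.
Qed.

Lemma tdot_delta n (i : 'I_n) (y : n.-tuple R) :
  tdot [tuple (i == j)%:R | j < n] y = tnth y i.
Proof.
rewrite /tdot (bigD1 i) //= tnth_mktuple eqxx mul1r big1 ?addr0 // => j ji.
by rewrite tnth_mktuple eq_sym (negbTE ji) mul0r.
Qed.

Lemma sqrBB_le (u v w : R) :
  (u - v - w) ^+ 2 <= 3 * (u ^+ 2 + v ^+ 2 + w ^+ 2).
Proof.
rewrite -subr_ge0.
have -> : 3 * (u ^+ 2 + v ^+ 2 + w ^+ 2) - (u - v - w) ^+ 2 =
  (u + v) ^+ 2 + (u + w) ^+ 2 + (v - w) ^+ 2 by ring.
by rewrite !addr_ge0 ?sqr_ge0.
Qed.

Lemma sqdist_le3 n (x y a m : n.-tuple R) :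
  sqdist a m <=
  3 * (sqdist x m + \sum_(i < n) tnth y i ^+ 2 + sqdist (tsub x y) a).
Proof.
rewrite /sqdist -!big_split mulr_sumr; apply: ler_sum => i _ /=.
rewrite tnth_mktuple.
have -> : tnth a i - tnth m i =
  (tnth x i - tnth m i) - tnth y i - (tnth x i - tnth y i - tnth a i) by ring.
exact: sqrBB_le.
Qed.

Lemma measurable_sqdist n (m : n.-tuple R) :
  measurable_fun setT (fun x : n.-tuple R => sqdist x m).
Proof.
apply: measurable_sum => i; apply: measurable_funX; apply: measurable_funB => //.
exact: measurable_tnth.
Qed.

End sqdist.

(* Dividing by n + 1 rather than n keeps the bound meaningful when n = 0. *)
Lemma exists_ge_of_lt_sum (R : realFieldType) n (f : 'I_n -> R) (r : R) :
  0 <= r -> r < \sum_(i < n) f i -> exists i, r / n.+1%:R <= f i.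
Proof.
move=> r0 rf; apply/existsP; apply: contraLR rf; rewrite negb_exists -leNgt.
move=> /forallP small; apply: (@le_trans _ _ (\sum_(i < n) r / n.+1%:R)).
  by apply: ler_sum => i _; rewrite ltW// ltNge small.
rewrite sumr_const card_ord -[_ *+ n]mulr_natr mulrAC ler_pdivrMr ?ltr0Sn//.
by rewrite ler_wpM2l// ler_nat.
Qed.

Lemma expR_sqdist_le_tails (R : realType) n (x y a m : n.-tuple R) (r : R) :
  0 <= r -> 9 * r <= sqdist a m ->
  expR (- sqdist (tsub x y) a) <=
  expR (- r) + \1_[set z | r <= sqdist z m] x +
  \sum_(i < n) \1_[set z | r / n.+1%:R <= z ^+ 2] (tnth y i).
Proof.
move=> r0 ram.
have tailX0 : 0 <= \1_[set z | r <= sqdist z m] x :> R by rewrite indicE ler0n.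
have tailY0 (P : pred 'I_n) : 0 <= \sum_(i < n | P i)
    \1_[set z | r / n.+1%:R <= z ^+ 2] (tnth y i) :> R.
  by apply: sumr_ge0 => i _; rewrite indicE ler0n.
have [rD|Dr] := leP r (sqdist (tsub x y) a).
  have : expR (- sqdist (tsub x y) a) <= expR (- r) by rewrite ler_expR lerN2.
  by move: (tailY0 xpredT); lra.
have e1 : expR (- sqdist (tsub x y) a) <= 1 by rewrite expR_le1 oppr_le0 sqdist_ge0.
have [rA|Ar] := leP r (sqdist x m).
  by rewrite indicE mem_set// mulr1n; move: (expR_ge0 (- r)) (tailY0 xpredT); lra.
have [i yi] : exists i, r / n.+1%:R <= tnth y i ^+ 2.
  by apply: exists_ge_of_lt_sum => //; move: (sqdist_le3 x y a m); lra.
rewrite (bigD1 i)//= [\1__ (tnth y i)]indicE mem_set// mulr1n.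
by move: (tailY0 (predC1 i)) (expR_ge0 (- r)); lra.
Qed.

Lemma measurable_superlevel d (T : measurableType d) (R : realType)
    (f : T -> R) (r : R) :
  measurable_fun setT f -> measurable [set x | r <= f x].
Proof.
move=> mf; rewrite (_ : [set x | r <= f x] = setT `&` f @^-1` `[r, +oo[).
  exact: mf.
by apply/seteqP; split=> x /=; rewrite in_itv/= andbT // => -[].
Qed.

Section gaussian_tails.
Variable R : realType.

Lemma normal_peakM (k s : R) : normal_peak (k * s) = `|k|^-1 * normal_peak s.
Proof.
by rewrite /normal_peak exprMn -mulrA -mulrnAr sqrtrM ?sqr_ge0// sqrtr_sqr invfM.
Qed.

Lemma normal_prob_sqr_tail (s rho : R) : s != 0 ->
  (normal_prob 0 s [set y | (rho <= y ^+ 2)%R] <=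
   (2 * expR (- (rho / (4 * s ^+ 2))))%:E)%E.
Proof.
move=> s0; have ss0 : 2 * s != 0 by rewrite mulf_neq0.
set c := 2 * expR (- (rho / (4 * s ^+ 2))).
(* On [rho <= y^2] the N(0, s) density is at most c times the N(0, 2s) one. *)
rewrite /normal_prob integral_mkcond.
apply: (@le_trans _ _ (\int[lebesgue_measure]_x
    (c%:E * (normal_pdf 0 (2 * s) x)%:E))%E); last first.
  rewrite ge0_integralZl//; last 3 first.
  - by apply/measurable_EFinP; exact: measurable_normal_pdf.
  - by move=> x _; rewrite lee_fin normal_pdf_ge0.
  - by rewrite lee_fin mulr_ge0 ?expR_ge0.
  by rewrite integral_normal_pdf mule1.
apply: ge0_le_integralT_nomeas => x.
  by rewrite patchE; case: ifP => _ //; rewrite lee_fin normal_pdf_ge0.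
rewrite patchE; case: ifP => [/set_mem /= rx|_]; last first.
  by rewrite -EFinM lee_fin mulr_ge0 ?normal_pdf_ge0// mulr_ge0 ?expR_ge0.
rewrite !normal_pdfE// -EFinM lee_fin normal_peakM ger0_norm//.
rewrite (_ : c * _ = normal_peak s *
    (expR (- (rho / (4 * s ^+ 2))) * normal_fun 0 (2 * s) x)); last first.
  by rewrite /c; field.
rewrite ler_pM2l ?normal_peak_gt0//.
rewrite /normal_fun -expRD ler_expR !subr0 -subr_ge0.
have -> : - (rho / (4 * s ^+ 2)) + - x ^+ 2 / ((2 * s) ^+ 2 *+ 2) -
    - x ^+ 2 / (s ^+ 2 *+ 2) = (3 * x ^+ 2 - 2 * rho) / (8 * s ^+ 2).
  by field.
apply: divr_ge0; last by apply: mulr_ge0 => //; exact: sqr_ge0.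
by move: (sqr_ge0 (x : R)) rx; lra.
Qed.

Lemma centered_gauss1_sqr_tail (s S rho : R) : 0 <= rho -> s ^+ 2 <= S ->
  (centered_gauss1 s [set y | (rho <= y ^+ 2)%R] <=
   (2 * expR (- (rho / (4 * S))))%:E)%E.
Proof.
move=> rho0 sS; rewrite /centered_gauss1; have [_|s0] := eqVneq s 0.
  rewrite diracE lee_fin; case: (boolP (_ \in _)) => [/set_mem /= rho_le0|_].
    have -> : rho = 0 by apply: le_anti; rewrite rho0 andbT; rewrite expr0n in rho_le0.
    by rewrite mul0r oppr0 expR0 mulr1 ler1n.
  by rewrite mulr_ge0 ?expR_ge0.
have s2_gt0 : 0 < s ^+ 2 by rewrite exprn_even_gt0.
apply: le_trans (normal_prob_sqr_tail rho s0) _.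
rewrite lee_fin ler_wpM2l// ler_expR lerN2 ler_wpM2l// lef_pV2 ?posrE//.
- by rewrite ler_pM2l.
- by rewrite mulr_gt0// (lt_le_trans s2_gt0).
- by rewrite mulr_gt0.
Qed.

End gaussian_tails.

Lemma centered_gaussian_coord_sqr_tail (R : realType) d (T : measurableType d)
    (P : probability T R) n (Y : T -> n.-tuple R) :
  centered_gaussian P Y ->
  exists2 S : R, 0 < S & forall (i : 'I_n) (rho : R), 0 <= rho ->
    (P ((fun w => tnth (Y w) i) @^-1` [set y | (rho <= y ^+ 2)%R]) <=
     (2 * expR (- (rho / S)))%:E)%E.
Proof.
move=> hY; pose delta (i : 'I_n) := [tuple ((i == j)%:R : R) | j < n].
have /choice[s hs] : forall i, exists s, forall A, measurable A ->
    P ((fun w => tdot (delta i) (Y w)) @^-1` A) = centered_gauss1 s A.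
  by move=> i; have [s _ hs] := hY (delta i); exists s.
have s2_ge0 i : 0 <= s i ^+ 2 by exact: sqr_ge0.
exists (4 * (1 + \sum_i s i ^+ 2)).
  by rewrite mulr_gt0// ltr_wpDr ?sumr_ge0.
move=> i rho rho0; have -> : (fun w => tnth (Y w) i) = fun w => tdot (delta i) (Y w).
  by apply/funext => w; rewrite tdot_delta.
rewrite hs; last exact/measurable_superlevel/measurable_funX.
apply: centered_gauss1_sqr_tail => //; rewrite (bigD1 i)//= addrCA lerDl.
by rewrite addr_ge0// sumr_ge0.
Qed.

Section lebesgue_nint.
Variable R : realType.

Lemma lebesgue_nint_ge0 n (f : n.-tuple R -> \bar R) :
  (forall x, (0 <= f x)%E) -> (0 <= lebesgue_nint f)%E.
Proof.
elim: n f => [|n IH] f f0 /=; first exact: f0.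
by apply: integral_ge0 => x _; apply: IH.
Qed.

Lemma le_lebesgue_nint n (f g : n.-tuple R -> \bar R) :
  (forall x, (0 <= f x)%E) -> (forall x, (f x <= g x)%E) ->
  (lebesgue_nint f <= lebesgue_nint g)%E.
Proof.
elim: n f g => [|n IH] f g f0 fg /=; first exact: fg.
apply: ge0_le_integralT_nomeas => x; first exact: lebesgue_nint_ge0.
exact: IH.
Qed.

Lemma integral_normal_fun (mu s : R) : s != 0 ->
  (\int[lebesgue_measure]_x (normal_fun mu s x)%:E = (normal_peak s)^-1%:E)%E.
Proof.
move=> s0; have peak_neq0 : normal_peak s != 0 by rewrite gt_eqF ?normal_peak_gt0.
have := integral_normal_pdf mu s; rewrite normal_pdfE//.
under eq_integral do rewrite EFinM.
rewrite ge0_integralZl//; last 3 first.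
- by apply/measurable_EFinP; exact: measurable_normal_fun.
- by move=> x _; rewrite lee_fin normal_fun_ge0.
- by rewrite lee_fin normal_peak_ge0.
move=> peak_int.
by rewrite -[LHS]mul1e -[1%E]/(1%:E) -(mulVf peak_neq0) EFinM -muleA peak_int mule1.
Qed.

Lemma lebesgue_nint_gauss (s : R) n (m : n.-tuple R) (c : R) : s != 0 -> 0 <= c ->
  lebesgue_nint (fun y => (c * expR (- sqdist y m / (s ^+ 2 *+ 2)))%:E) =
  (c * (normal_peak s)^-1 ^+ n)%:E.
Proof.
move=> s0; elim: n m c => [|n IH] m c c0 /=.
  by rewrite /sqdist big_ord0 oppr0 mul0r expR0 expr0.
case/tupleP: m => mu m.
transitivity (\int[lebesgue_measure]_x
   ((c * (normal_peak s)^-1 ^+ n)%:E * (normal_fun mu s x)%:E))%E.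
  apply: eq_integral => x _.
  rewrite -EFinM mulrAC -(IH m) ?mulr_ge0 ?normal_fun_ge0//.
  congr lebesgue_nint; apply/funext => t.
  rewrite sqdist_cons /normal_fun -mulrA -expRD.
  by rewrite opprD mulrDl.
rewrite ge0_integralZl//; last 3 first.
- by apply/measurable_EFinP; exact: measurable_normal_fun.
- by move=> x _; rewrite lee_fin normal_fun_ge0.
- by rewrite lee_fin mulr_ge0// exprn_ge0// invr_ge0 normal_peak_ge0.
by rewrite integral_normal_fun// -EFinM exprSr mulrA.
Qed.

End lebesgue_nint.

Lemma density_sqdist_tail (R : realType) d (T : measurableType d)
    (P : probability T R) n (X : T -> n.-tuple R) (p : n.-tuple R -> R)
    (m : n.-tuple R) (c C : R) :
  0 < c -> 0 <= C -> has_lebesgue_density P X p ->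
  (forall x, p x <= C * expR (- c * sqdist x m)) ->
  exists2 K : R, 0 <= K & forall r : R,
    (P (X @^-1` [set x | (r <= sqdist x m)%R]) <=
     (K * expR (- (c / 2 * r)))%:E)%E.
Proof.
move=> c0 C0 [_ [p0 hP]] p_le; set s := Num.sqrt c^-1.
(* Half of the decay e^{-c |x - m|^2} is the Gaussian kernel of variance s^2,
   the other half gives e^{-c r / 2} on the tail event. *)
have s0 : s != 0 by rewrite gt_eqF// sqrtr_gt0 invr_gt0.
have s2 : s ^+ 2 *+ 2 = 2 / c by rewrite sqr_sqrtr ?invr_ge0 ?ltW// mulr_natl.
exists (C * (normal_peak s)^-1 ^+ n).
  by rewrite mulr_ge0// exprn_ge0// invr_ge0 normal_peak_ge0.
move=> r; have Ce0 : 0 <= C * expR (- (c / 2 * r)) by rewrite mulr_ge0 ?expR_ge0.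
rewrite hP; last exact: measurable_superlevel (measurable_sqdist m).
rewrite mulrAC -(lebesgue_nint_gauss m s0 Ce0) s2.
apply: le_lebesgue_nint => x; first by rewrite lee_fin mulr_ge0// indicE ler0n.
rewrite lee_fin indicE; case: (boolP (x \in _)) => [/set_mem /= rx|_].
  rewrite mul1r (le_trans (p_le x))// -mulrA ler_wpM2l// -expRD ler_expR.
  rewrite -subr_ge0 (_ : _ - _ = c / 2 * (sqdist x m - r)); last first.
    by field; exact: lt0r_neq0.
  by rewrite mulr_ge0 ?subr_ge0// divr_ge0// ltW.
by rewrite /= mul0r mulr_ge0 ?expR_ge0.
Qed.

Lemma expectation_expR_sqdist_le_tails (R : realType) d (T : measurableType d)
    (P : probability T R) n (X Y : T -> n.-tuple R) (a m : n.-tuple R) (r : R) :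
  measurable_fun setT X -> measurable_fun setT Y ->
  0 <= r -> 9 * r <= sqdist a m ->
  (\int[P]_w (expR (- sqdist (tsub (X w) (Y w)) a))%:E <=
   (expR (- r))%:E + P (X @^-1` [set x | (r <= sqdist x m)%R]) +
   \sum_(i < n) P ((fun w => tnth (Y w) i) @^-1`
                     [set y | (r / n.+1%:R <= y ^+ 2)%R]))%E.
Proof.
move=> mX mY r0 ram.
pose A (o : option 'I_n) := if o is Some i
  then (fun w => tnth (Y w) i) @^-1` [set y | (r / n.+1%:R <= y ^+ 2)%R]
  else X @^-1` [set x | (r <= sqdist x m)%R].
have := @ge0_integral_le_union_bound _ _ _ P _
  (None :: [seq Some i | i <- index_enum 'I_n]) A _ (expR (- r)).
rewrite big_cons big_map addeA; apply=> [|[i|]|w|w]; rewrite ?expR_ge0//.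
- apply/measurable_superlevel/measurable_funX.
  exact: measurableT_comp (measurable_tnth i) mY.
- exact/measurable_superlevel/(measurableT_comp (measurable_sqdist m) mX).
by rewrite big_cons big_map addrA; exact: expR_sqdist_le_tails.
Qed.

Lemma expR_tails_le (R : realType) n (c K S q r : R) :
  0 <= K -> 0 <= r -> q <= 1 -> q <= c / 2 -> q <= (n.+1%:R * S)^-1 ->
  expR (- r) + K * expR (- (c / 2 * r)) +
  \sum_(i < n) 2 * expR (- (r / n.+1%:R / S)) <=
  (1 + K + 2 * n%:R) * expR (- (q * r)).
Proof.
move=> K0 r0 q1 qc qS.
have decay k : q <= k -> expR (- (k * r)) <= expR (- (q * r)).
  by move=> qk; rewrite ler_expR lerN2 ler_wpM2r.
have e1 := decay 1 q1; rewrite mul1r in e1.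
have e3 := decay _ qS; rewrite invfM mulrC mulrA in e3.
rewrite sumr_const card_ord -[_ *+ n]mulr_natr.
move: e1 (ler_wpM2l K0 (decay _ qc)) (ler_wpM2r (ler0n R n) (ler_wpM2l (ler0n R 2) e3)).
set E := expR (- (q * r)); lra.
Qed.

Theorem lemma5p1 (R : realType) (d : measure_display) (Omega : measurableType d)
  (P : probability Omega R) (n : nat) (X Y : Omega -> n.-tuple R)
  (mX : measurable_fun setT X) (mY : measurable_fun setT Y)
  (hY : centered_gaussian P Y)
  (cX CX : R) (cX0 : 0 < cX) (CX0 : 0 < CX) (m : n.-tuple R)
  (pX : n.-tuple R -> R) (hdens : has_lebesgue_density P X pX)
  (hbound : forall x, pX x <= CX * expR (- cX * sqdist x m)) :
  exists2 C : R, 0 < C &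
    forall a : n.-tuple R,
      (\int[P]_w (expR (- sqdist (tsub (X w) (Y w)) a))%:E
        <= (C * expR (- (cX / C) * sqdist a m))%:E)%E.
Proof.
have [KX KX0 tailX] := density_sqdist_tail cX0 (ltW CX0) hdens hbound.
have [S S0 tailY] := centered_gaussian_coord_sqr_tail hY.
have n0 := ler0n R n; have cXS0 : 0 <= 9 * cX * (n.+1%:R * S).
  by rewrite !mulr_ge0// ltW.
pose C := 1 + KX + 2 * n%:R + 18 + 9 * cX + 9 * cX * (n.+1%:R * S).
have C0 : 0 < C by rewrite /C; lra.
exists C => // a; set r := sqdist a m / 9.
have r0 : 0 <= r by rewrite divr_ge0 ?sqdist_ge0.
have ram : 9 * r <= sqdist a m by rewrite /r; lra.
apply: le_trans (expectation_expR_sqdist_le_tails P mX mY r0 ram) _.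
have tailYr i := tailY i _ (divr_ge0 r0 (ler0n R n.+1)).
apply: le_trans (leeD (leeD (lexx _) (tailX r)) _) _.
  by apply: lee_sum => i _; exact: tailYr.
rewrite sumEFin -!EFinD lee_fin (_ : - (cX / C) * _ = - (9 * cX / C * r)); last first.
  by rewrite /r; field; rewrite gt_eqF.
apply: le_trans (@expR_tails_le _ _ cX _ S (9 * cX / C) _ KX0 r0 _ _ _) _.
- by rewrite ler_pdivrMr// mul1r /C; lra.
- by rewrite ler_pdivrMr// /C; nra.
- by rewrite ler_pdivrMr// ler_pdivlMl ?mulr_gt0// /C; lra.
by rewrite ler_wpM2r ?expR_ge0// /C; lra.
Qed.
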